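(* Let $n\ge1$, let $0<x_1<x_2<\dots<x_{n+1}<1$, and let $A$ be the $(n+1)\times(n+1)$ Bernstein–Vandermonde matrix, $a_{r,c}=\binom{n}{c-1}x_r^{\,c-1}(1-x_r)^{n-c+1}$. Then the diagonal pivots of the Neville elimination of $A$ are, for $i=1,\dots,n+1$, $$p_{i,i}=\frac{\binom{n}{i-1}(1-x_i)^{n-i+1}\prod_{k=1}^{i-1}(x_i-x_k)}{\prod_{k=1}^{i-1}(1-x_k)}$$ (empty products equal $1$).
   Context: Neville elimination of a nonsingular $N\times N$ matrix $M$: set $M_1=M$ and, for $t=1,\dots,N-1$, obtain $M_{t+1}=(a^{(t+1)}_{i,j})$ from $M_t=(a^{(t)}_{i,j})$ by $a^{(t+1)}_{i,j}=a^{(t)}_{i,j}$ if $i\le t$; $a^{(t+1)}_{i,j}=a^{(t)}_{i,j}-\big(a^{(t)}_{i,t}/a^{(t)}_{i-1,t}\big)a^{(t)}_{i-1,j}$ if $i\ge t+1$ and $j\ge t+1$; and $a^{(t+1)}_{i,j}=0$ otherwise. The pivot $(i,j)$ is $p_{i,j}=a^{(j)}_{i,j}$ for $1\le j\le i\le N$; the diagonal pivots are $p_{i,i}$. *)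

(* Indices are 0-based: row/column r of 'M_(n.+1) is r+1 in the paper. *)
From HB Require Import structures.
From mathcomp Require Import all_boot all_order all_algebra.
Set Implicit Arguments. Unset Strict Implicit. Unset Printing Implicit Defensive.
Import Order.TTheory GRing.Theory Num.Theory.
Local Open Scope ring_scope.

Section Neville.
Variable R : fieldType.
Variable n : nat.

(* One Neville step. [neville_step t M] maps the paper's M_{t+1} to M_{t+2}
   (0-based t: rows i <= t are kept, columns j > t are updated using the
   previous row, the rest is zeroed). *)
Definition neville_step (t : nat) (M : 'M[R]_n.+1) : 'M[R]_n.+1 :=
  \matrix_(i, j)
    if (i <= t)%N then M i j
    else if (t < j)%N then
      M i j - (M i (inord t) / M (inord i.-1) (inord t)) * M (inord i.-1) j
    else 0.

(* [neville_iter M t] is the paper's M_{t+1}. *)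
Fixpoint neville_iter (M : 'M[R]_n.+1) (t : nat) : 'M[R]_n.+1 :=
  match t with
  | 0 => M
  | t'.+1 => neville_step t' (neville_iter M t')
  end.

(* Pivot p_{i,j} = a^{(j)}_{i,j} (0-based: entry (i,j) of neville_iter M j). *)
Definition neville_pivot (M : 'M[R]_n.+1) (i j : 'I_n.+1) : R :=
  neville_iter M j i j.

End Neville.

Definition bernstein_vandermonde (R : fieldType) (n : nat) (x : 'I_n.+1 -> R)
  : 'M[R]_n.+1 :=
  \matrix_(r, c) ('C(n, c)%:R * x r ^+ c * (1 - x r) ^+ (n - c)).

From HB Require Import structures.
From mathcomp Require Import all_boot all_order all_algebra.
From mathcomp Require Import ring zify.
Import Order.TTheory GRing.Theory Num.Theory.
Local Open Scope ring_scope.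

(* Writing y_r = x_r / (1 - x_r), the Bernstein-Vandermonde matrix is the
   Vandermonde matrix (y_r^c) scaled by the nonzero row factors (1 - x_r)^n
   and column factors C(n, c); Neville elimination commutes with such
   scalings, so it suffices to compute the pivots of a Vandermonde matrix.
   For those, after t steps the entry (i, j) with i, j >= t equals
   prod_(i-t <= k < i) (y_i - y_k) times the complete homogeneous symmetric
   polynomial h_(j-t)(y_(i-t), ..., y_i), because
   h_m(S, a) - h_m(S, b) = (a - b) h_(m-1)(S, a, b). *)

Lemma neville_iter_scale (R : fieldType) n (M : 'M[R]_n.+1) (d c : 'I_n.+1 -> R) :
    (forall i, d i != 0) -> (forall j, c j != 0) ->
  forall t i j, neville_iter (\matrix_(i, j) (d i * c j * M i j)) t i j
                = d i * c j * neville_iter M t i j.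
Proof.
move=> d_neq0 c_neq0; elim=> [|t IH] i j /=; first by rewrite mxE.
rewrite /neville_step !mxE !IH; case: ifP => // _.
case: ifP => _; last by rewrite mulr0.
set piv := neville_iter M t (inord i.-1) (inord t).
have [-> | piv_neq0] := eqVneq piv 0.
  by rewrite !mulr0 invr0 !mulr0 !mul0r !subr0.
by field; rewrite d_neq0 c_neq0 piv_neq0.
Qed.

Section TruncatedGeometric.
Variables (R : comNzRingType) (n : nat).

Definition geom_trunc (a : R) : {poly R} := \poly_(k < n.+1) a ^+ k.

Lemma coef0_geom_trunc a : (geom_trunc a)`_0 = 1.
Proof. by rewrite coef_poly expr0. Qed.

Lemma geom_truncM a :
  geom_trunc a * (1 - a%:P * 'X) = 1 - (a ^+ n.+1)%:P * 'X^(n.+1).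
Proof.
rewrite /geom_trunc poly_def -(big_mkord xpredT (fun i => a ^+ i *: 'X^i)).
under eq_bigr do rewrite -mul_polyC.
rewrite mulrBr mulr1 big_distrl /=.
have shiftE i : (a ^+ i)%:P * 'X^i * (a%:P * 'X) = (a ^+ i.+1)%:P * 'X^(i.+1).
  by rewrite exprS exprSr polyCM; ring.
under [X in _ - X]eq_bigr do rewrite shiftE.
rewrite -[LHS]opprB -sumrB (telescope_sumr (fun i => (a ^+ i)%:P * 'X^i)) //.
by rewrite !expr0 mul1r opprB.
Qed.

(* Up to degree n, [geom_trunc a] is the series of 1 / (1 - a X), so this is
   the identity h_m(S, a) - h_m(S, b) = (a - b) h_(m-1)(S, a, b). *)
Lemma coef_geom_truncMB (q : {poly R}) a b m : (0 < m <= n)%N ->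
  (q * geom_trunc a)`_m - (geom_trunc b * q)`_m
    = (a - b) * (geom_trunc b * q * geom_trunc a)`_m.-1.
Proof.
case/andP=> m_gt0 m_le_n.
set U := geom_trunc b * q * geom_trunc a.
have UE : (a - b)%:P * U * 'X = q * geom_trunc a - geom_trunc b * q
    + (geom_trunc b * q * (a ^+ n.+1)%:P - geom_trunc a * q * (b ^+ n.+1)%:P)
      * 'X^(n.+1).
  transitivity (U * (1 - b%:P * 'X) - U * (1 - a%:P * 'X)).
    by rewrite polyCB; ring.
  have -> : U * (1 - a%:P * 'X)
      = geom_trunc b * q * (geom_trunc a * (1 - a%:P * 'X)) by rewrite /U; ring.
  have -> : U * (1 - b%:P * 'X)
      = geom_trunc a * q * (geom_trunc b * (1 - b%:P * 'X)) by rewrite /U; ring.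
  rewrite !geom_truncM; ring.
have := congr1 (fun p : {poly R} => p`_m) UE.
rewrite coefMX coefD coefMXn ltnS m_le_n addr0 coefB (gtn_eqF m_gt0).
by rewrite coefCM => ->.
Qed.

End TruncatedGeometric.
Arguments geom_trunc {R} n a.

Section Vandermonde.
Variables (R : fieldType) (n : nat) (y : nat -> R).
Hypothesis y_inj : {in [pred k | (k <= n)%N] &, injective y}.

Definition vandermonde : 'M[R]_n.+1 := \matrix_(i, j) y i ^+ j.

Definition geom_prod i t := \prod_(i - t <= k < i.+1) geom_trunc n (y k).
Definition diff_prod i t := \prod_(i - t <= k < i) (y i - y k).

Lemma coef0_geom_prod i t : (geom_prod i t)`_0 = 1.
Proof.
rewrite -horner_coef0 horner_prod; apply: big1 => k _.
by rewrite horner_coef0 coef0_geom_trunc.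
Qed.

Lemma diff_prod_neq0 i t : (i <= n)%N -> diff_prod i t != 0.
Proof.
move=> i_le_n; rewrite prodf_seq_neq0; apply/allP => k.
rewrite mem_index_iota => /andP[_ k_lt_i] /=; rewrite subr_eq0.
have k_le_n : (k <= n)%N by lia.
by apply: contraTneq k_lt_i => /y_inj ->; rewrite ?ltnn.
Qed.

Lemma neville_iter_vandermonde t (i j : 'I_n.+1) : (t <= i)%N ->
  neville_iter vandermonde t i j
    = if (t <= j)%N then diff_prod i t * (geom_prod i t)`_(j - t) else 0.
Proof.
elim: t i j => [|t IH] i j le_ti.
  rewrite /= mxE /diff_prod /geom_prod subn0 big_geq // big_nat1 mul1r.
  by rewrite coef_poly !subn0 ltn_ord.
rewrite /= /neville_step mxE leqNgt le_ti /=.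
case: ifP => // t_lt_j.
have i_le_n : (i <= n)%N by rewrite -ltnS.
have inord_i1 : ((inord i.-1 : 'I_n.+1) : nat) = i.-1 by rewrite inordK //; lia.
have inord_t : ((inord t : 'I_n.+1) : nat) = t by rewrite inordK //; lia.
rewrite !IH ?inord_i1 ?inord_t ?leqnn ?(ltnW t_lt_j); try lia.
have dp_neq0 : diff_prod i.-1 t != 0 by apply: diff_prod_neq0; lia.
rewrite subnn !coef0_geom_prod !mulr1.
have -> : diff_prod i t / diff_prod i.-1 t
      * (diff_prod i.-1 t * (geom_prod i.-1 t)`_(j - t))
    = diff_prod i t * (geom_prod i.-1 t)`_(j - t) by field.
rewrite -mulrBr /geom_prod /diff_prod.
set s := (i - t.+1)%N.
have [-> -> ->] : [/\ (i.-1 - t)%N = s, i.-1.+1 = i & (i - t)%N = s.+1].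
  by split; lia.
(* Split off k = s and k = i, leaving y_(s+1), ..., y_(i-1) common to all products. *)
rewrite (big_nat_recr i) ?(@big_ltn _ _ _ s) /=; try lia.
rewrite (big_nat_recr i) ?(@big_ltn _ _ _ s i) /=; try lia.
rewrite coef_geom_truncMB; last by have := ltn_ord j; lia.
have -> : (j - t).-1 = (j - t.+1)%N by lia.
by rewrite !mulrA [_ * (y i - y s)]mulrC.
Qed.

Lemma neville_pivot_vandermonde (i : 'I_n.+1) :
  neville_pivot vandermonde i i = \prod_(0 <= k < i) (y i - y k).
Proof.
rewrite /neville_pivot neville_iter_vandermonde // leqnn subnn.
by rewrite coef0_geom_prod mulr1 /diff_prod subnn.
Qed.

End Vandermonde.
Arguments vandermonde {R} n y.

Lemma big_ord_lt_inord (T : Type) (idx : T) (op : T -> T -> T) n (i : 'I_n.+1)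
    (F : 'I_n.+1 -> T) :
  \big[op/idx]_(k < n.+1 | (k < i)%N) F k = \big[op/idx]_(0 <= k < i) F (inord k).
Proof.
rewrite big_mkord.
rewrite (big_ord_widen n.+1 (fun k : nat => F (inord k)) (ltnW (ltn_ord i))).
by apply: eq_bigr => k _; rewrite inord_val.
Qed.

Section BernsteinVandermonde.
Variables (R : numFieldType) (n : nat) (x : 'I_n.+1 -> R).
Hypotheses (x_inj : injective x) (x_neq1 : forall i, x i != 1).

Let x_ k := x (inord k).
Let y k := x_ k / (1 - x_ k).

Let subx_neq0 k : 1 - x_ k != 0.
Proof. by rewrite subr_eq0 eq_sym x_neq1. Qed.

Lemma bernstein_vandermondeE : bernstein_vandermonde x =
  \matrix_(r, c) ((1 - x r) ^+ n * 'C(n, c)%:R * vandermonde n y r c).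
Proof.
apply/matrixP => r c; rewrite !mxE /y /x_ inord_val expr_div_n.
have c_le_n : (c <= n)%N by rewrite -ltnS.
rewrite -[in (1 - x r) ^+ n](subnK c_le_n) exprD.
by field; rewrite expf_neq0 // -[r]inord_val subx_neq0.
Qed.

Let y_inj : {in [pred k | (k <= n)%N] &, injective y}.
Proof.
move=> k l k_le_n l_le_n /eqP; rewrite eqr_div ?subx_neq0 // => /eqP yE.
have : x_ k - x_ l = x_ k * (1 - x_ l) - x_ l * (1 - x_ k) by ring.
rewrite yE subrr => /eqP; rewrite subr_eq0 => /eqP /x_inj /(congr1 (@nat_of_ord _)).
by rewrite !inordK ?ltnS.
Qed.

Lemma neville_pivot_bernstein_vandermonde (i : 'I_n.+1) :
  neville_pivot (bernstein_vandermonde x) i i =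
    'C(n, i)%:R * (1 - x i) ^+ (n - i)
      * (\prod_(k < n.+1 | (k < i)%N) (x i - x k))
      / (\prod_(k < n.+1 | (k < i)%N) (1 - x k)).
Proof.
have subxi_neq0 : 1 - x i != 0 by rewrite -[i]inord_val subx_neq0.
have row_neq0 (r : 'I_n.+1) : (1 - x r) ^+ n != 0.
  by rewrite expf_neq0 // -[r]inord_val subx_neq0.
have col_neq0 (c : 'I_n.+1) : ('C(n, c)%:R : R) != 0.
  by rewrite pnatr_eq0 -lt0n bin_gt0 -ltnS.
rewrite bernstein_vandermondeE /neville_pivot neville_iter_scale //.
rewrite -/(neville_pivot _ _ _) neville_pivot_vandermonde // !big_ord_lt_inord.
have ydiffE k : y i - y k = (x i - x_ k) / ((1 - x i) * (1 - x_ k)).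
  by rewrite /y /x_ inord_val; field; rewrite subxi_neq0 subx_neq0.
rewrite (eq_bigr _ (fun k _ => ydiffE k)) prodf_div big_split prodr_const_nat subn0.
have i_le_n : (i <= n)%N by rewrite -ltnS.
rewrite -[in (1 - x i) ^+ n](subnK i_le_n) exprD.
have prod_neq0 : \prod_(0 <= k < i) (1 - x_ k) != 0.
  by rewrite prodf_seq_neq0; apply/allP => k _; apply: subx_neq0.
by rewrite /= /x_ in prod_neq0 *; field; rewrite prod_neq0 expf_neq0.
Qed.

End BernsteinVandermonde.

Theorem mainTheorem7 (R : realFieldType) (n : nat) (x : 'I_n.+1 -> R)
  (hn : (1 <= n)%N)
  (hpos : forall i, 0 < x i) (hlt1 : forall i, x i < 1)
  (hinc : forall i j : 'I_n.+1, (i < j)%N -> x i < x j) :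
  forall i : 'I_n.+1,
    neville_pivot (bernstein_vandermonde x) i i =
    'C(n, i)%:R * (1 - x i) ^+ (n - i)
      * (\prod_(k < n.+1 | (k < i)%N) (x i - x k))
      / (\prod_(k < n.+1 | (k < i)%N) (1 - x k)).
Proof.
apply: neville_pivot_bernstein_vandermonde => [i j xE|i]; last first.
  by rewrite lt_eqF ?hlt1.
apply/val_inj; case: (ltngtP i j) => // ij; have := hinc _ _ ij.
- by rewrite xE ltxx.
- by rewrite xE ltxx.
Qed.
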